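(* Let $\mathcal{X}=\mathcal{Y}=\mathcal{A}=\mathcal{B}=\{0,1\}$ and $\epsilon\in[0,1)$. Then the inequality $$(1-\epsilon)\,p(00|00)+\epsilon(1-\epsilon)\,p(11|00)-p(01|01)-p(10|10)-p(00|11)\le\epsilon(1-\epsilon)$$ is valid for every $p\in\mathcal{P}_2^{AB,(\epsilon,\epsilon)}$ and defines a facet of this polytope, i.e. the set of points of $\mathcal{P}_2^{AB,(\epsilon,\epsilon)}$ attaining equality has affine dimension $\dim\mathcal{P}_2^{AB,(\epsilon,\epsilon)}-1$ (for $\epsilon\in(0,1)$ the polytope has dimension $12$).
   Context: Here $p(ab|xy)$ denotes the probability of outputs $(a,b)$ given inputs $(x,y)$. $\mathcal{P}_2^{AB,(\epsilon,\epsilon)}\subset\mathbb{R}^{16}$ is the set of all conditional distributions $p$ for which there exist a probability space $(\Lambda,q)$ and distributions $p_A(\cdot|x,y,\lambda)$ on $\{0,1\}$, $p_B(\cdot|x,y,\lambda)$ on $\{0,1\}$ with $p(ab|xy)=\int q(d\lambda)p_A(a|xy\lambda)p_B(b|xy\lambda)$ for all $a,b,x,y$, $\frac12\sum_a|p_A(a|xy\lambda)-p_A(a|xy'\lambda)|\le\epsilon$ for all $x,y,y',\lambda$, and $\frac12\sum_b|p_B(b|xy\lambda)-p_B(b|x'y\lambda)|\le\epsilon$ for all $y,x,x',\lambda$. It is a convex polytope. *)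

From HB Require Import structures.
From mathcomp Require Import all_boot all_order all_algebra.
From mathcomp Require Import all_classical all_reals all_analysis.
Set Implicit Arguments. Unset Strict Implicit. Unset Printing Implicit Defensive.
Import Order.TTheory GRing.Theory Num.Theory.
Local Open Scope ring_scope.

(* A behaviour p(ab|xy), written p a b x y, with a,b,x,y in {0,1} = bool
   (false = 0, true = 1).  Points of R^16. *)
Definition behav (R : realType) := bool -> bool -> bool -> bool -> R.

Definition in_P (R : realType) (eps : R) (p : behav R) : Prop :=
  exists (d : measure_display) (T : measurableType d) (q : probability T R)
         (pA pB : bool -> bool -> bool -> T -> R),
    (forall a x y, measurable_fun setT (pA a x y)) /\
    (forall b x y, measurable_fun setT (pB b x y)) /\
    [/\
        (forall x y l, (0 <= pA false x y l /\ 0 <= pA true x y l /\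
                           pA false x y l + pA true x y l = 1 /\
                           0 <= pB false x y l /\ 0 <= pB true x y l /\
                           pB false x y l + pB true x y l = 1)),
        (forall x y y' l, 2^-1 * (`|pA false x y l - pA false x y' l|
                               + `|pA true x y l - pA true x y' l|) <= eps),
        (forall y x x' l, 2^-1 * (`|pB false x y l - pB false x' y l|
                               + `|pB true x y l - pB true x' y l|) <= eps) &
        (forall a b x y, ((p a b x y)%:E =
            \int[q]_l ((pA a x y l * pB b x y l)%:E))%E)].

Definition aff_indep (R : realType) (k : nat) (q : 'I_k.+1 -> behav R) : Prop :=
  forall c : 'I_k.+1 -> R,
    \sum_(i < k.+1) c i = 0 ->
    (forall a b x y, \sum_(i < k.+1) c i * q i a b x y = 0) ->
    forall i, c i = 0.

Definition affdim (R : realType) (S : behav R -> Prop) (n : nat) : Prop :=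
  (exists q : 'I_n.+1 -> behav R, (forall i, S (q i)) /\ aff_indep q) /\
  (forall q : 'I_n.+2 -> behav R, (forall i, S (q i)) -> ~ aff_indep q).

Definition ineq_lhs (R : realType) (eps : R) (p : behav R) : R :=
  (1 - eps) * p false false false false
  + eps * (1 - eps) * p true true false false
  - p false true false true
  - p true false true false
  - p false false true true.

(* Every p in the polytope is an average over the hidden variable of product
   behaviours A(a|xy) B(b|xy) whose local responses depend on the remote input
   by at most eps.  Validity therefore reduces to a polynomial inequality for a
   single pair (A, B): if A(0|00) or B(0|00) is at most eps the left-hand side
   is at most eps(1-eps) outright; otherwise, after shifting both by eps, the
   signalling bounds reduce the three subtracted terms to a bilinear function of
   A(0|11) and B(0|11), which is minimised at a corner of a box.

   For the facet, product behaviours whose response pairs are vertices of the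
   hexagon {(u, v) in [0,1]^2 : |u - v| <= eps} supply 13 affinely independent
   points of the polytope, 12 of them on the face, each family certified by a
   triangular pattern of vanishing coordinates.  Conversely, normalisation
   shows that 12 coordinates determine the affine hull of the polytope, and the
   face equation determines p(00|00) from the others since eps < 1.  For
   eps = 0 the polytope is the local polytope, where no-signalling lowers the
   two dimensions to 8 and 7. *)

From HB Require Import structures.
From mathcomp Require Import all_boot all_order all_algebra.
From mathcomp Require Import all_classical all_reals all_analysis.
From mathcomp Require Import measurable_realfun ring lra.
Import Order.TTheory GRing.Theory Num.Theory.
Set Implicit Arguments. Unset Strict Implicit. Unset Printing Implicit Defensive.
Local Open Scope ring_scope.

Definition entry := (bool * bool * bool * bool)%type.

Section LinearFunctionals.
Variable R : realType.

Definition behav_at (p : behav R) (k : entry) : R :=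
  let '(a, b, x, y) := k in p a b x y.

Definition lincomb (s : seq (R * entry)) (p : behav R) : R :=
  \sum_(wk <- s) wk.1 * behav_at p wk.2.

Definition prod_behav (A B : bool -> bool -> bool -> R) : behav R :=
  fun a b x y => A a x y * B b x y.

Definition local_response (e : R) (A B : bool -> bool -> bool -> R) : Prop :=
  [/\ (forall x y, 0 <= A false x y /\ 0 <= A true x y /\
                   A false x y + A true x y = 1 /\
                   0 <= B false x y /\ 0 <= B true x y /\
                   B false x y + B true x y = 1),
      (forall x y y', 2^-1 * (`|A false x y - A false x y'|
                              + `|A true x y - A true x y'|) <= e) &
      (forall y x x', 2^-1 * (`|B false x y - B false x' y|
                              + `|B true x y - B true x' y|) <= e)].

Lemma lincomb_cons w k s p :
  lincomb ((w, k) :: s) p = w * behav_at p k + lincomb s p.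
Proof. by rewrite /lincomb big_cons. Qed.

Lemma lincomb_nil p : lincomb [::] p = 0.
Proof. by rewrite /lincomb big_nil. Qed.

Lemma lincomb_opp s p : lincomb [seq (- wk.1, wk.2) | wk <- s] p = - lincomb s p.
Proof.
by rewrite /lincomb big_map -sumrN; apply: eq_bigr => wk _; rewrite mulNr.
Qed.

(** * Behaviours of the polytope as averages of product behaviours *)

Section Integration.
Variables (d : measure_display) (T : measurableType d) (P : probability T R).

Let integrable_fin (f : T -> R) := P.-integrable setT (EFin \o f).

Lemma integrable_fin_bounded (f : T -> R) (M : R) :
  measurable_fun setT f -> (forall l, `|f l| <= M) -> integrable_fin f.
Proof.
move=> mf fM; apply: (le_integrable measurableT (g := EFin \o cst M)).
- exact/measurable_EFinP.
- by move=> l _ /=; rewrite lee_fin (le_trans (fM l)) // ler_norm.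
- exact: finite_measure_integrable_cst.
Qed.

Lemma integrable_finD (f g : T -> R) :
  integrable_fin f -> integrable_fin g -> integrable_fin (fun l => f l + g l).
Proof.
move=> intf intg; rewrite /integrable_fin.
have -> : EFin \o (fun l => f l + g l) = (EFin \o f) \+ (EFin \o g).
  by apply: funext => l; rewrite /= EFinD.
exact: integrableD.
Qed.

Lemma integrable_finZ (w : R) (f : T -> R) :
  integrable_fin f -> integrable_fin (fun l => w * f l).
Proof.
move=> intf; rewrite /integrable_fin.
have -> : EFin \o (fun l => w * f l) = (fun l => w%:E * (EFin \o f) l)%E.
  by apply: funext => l; rewrite /= EFinM.
exact: integrableZl.
Qed.

Lemma integral_lincomb (F : T -> behav R) (s : seq (R * entry)) :
  (forall k, integrable_fin (fun l => behav_at (F l) k)) ->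
  integrable_fin (fun l => lincomb s (F l)) /\
  (\int[P]_l (lincomb s (F l))%:E =
     \sum_(wk <- s) wk.1%:E * \int[P]_l (behav_at (F l) wk.2)%:E)%E.
Proof.
move=> intF; elim: s => [|[w k] s [ints eqs]].
  rewrite big_nil; split.
    rewrite /integrable_fin; under eq_fun do rewrite lincomb_nil.
    exact: finite_measure_integrable_cst.
  under eq_integral do rewrite lincomb_nil.
  exact: integral0.
have intk := integrable_finZ w (intF k).
split.
  rewrite /integrable_fin; under eq_fun do rewrite lincomb_cons.
  exact: integrable_finD.
under eq_integral do rewrite lincomb_cons EFinD.
rewrite integralD // big_cons -eqs; congr (_ + _)%E.
under eq_integral do rewrite EFinM.
by rewrite integralZl //; exact: intF.
Qed.

End Integration.

Section InPLincomb.
Variables (e : R) (p : behav R).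
Hypothesis hp : in_P e p.

Lemma in_P_lincomb_le s b :
  (forall A B, local_response e A B -> lincomb s (prod_behav A B) <= b) ->
  lincomb s p <= b.
Proof.
case: hp => [d [T [P [pA [pB [mA [mB [hnorm hA hB hint]]]]]]]] hbound.
pose F l := prod_behav (fun a x y => pA a x y l) (fun b x y => pB b x y l).
have intF k : P.-integrable setT (EFin \o fun l => behav_at (F l) k).
  case: k => [[[a b'] x] y]; apply: (integrable_fin_bounded P (M := 1)).
    exact: measurable_funM.
  move=> l; rewrite /F /prod_behav /= normrM.
  have [A0 [A1 [A01 [B0 [B1 B01]]]]] := hnorm x y l.
  rewrite -[1](mulr1 1); apply: ler_pM => //.
    by case: a; rewrite ger0_norm //; lra.
  by case: b'; rewrite ger0_norm //; lra.
have [intFs eqFs] := integral_lincomb s intF.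
have eqp : ((lincomb s p)%:E = \int[P]_l (lincomb s (F l))%:E)%E.
  rewrite eqFs /lincomb -sumEFin; apply: eq_bigr => -[w [[[a b'] x] y]] _.
  by rewrite EFinM hint.
rewrite -lee_fin eqp.
have -> : (b%:E = \int[P]_l (cst b%:E l))%E.
  by rewrite integral_cst // -[LHS]mule1; congr (_ * _)%E; exact/esym/probability_setT.
apply: le_integral => //; first exact: finite_measure_integrable_cst.
move=> l _; rewrite lee_fin; apply: hbound; split.
- exact: (fun x y => hnorm x y l).
- exact: (fun x y y' => hA x y y' l).
- exact: (fun y x x' => hB y x x' l).
Qed.

Lemma in_P_lincomb_eq s b :
  (forall A B, local_response e A B -> lincomb s (prod_behav A B) = b) ->
  lincomb s p = b.
Proof.
move=> hbound; apply/eqP; rewrite eq_le; apply/andP; split.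
  by apply: in_P_lincomb_le => A B /hbound ->.
rewrite -lerN2 -lincomb_opp; apply: in_P_lincomb_le => A B /hbound.
by rewrite lincomb_opp => ->.
Qed.

End InPLincomb.
End LinearFunctionals.

(** * Validity of the inequality *)

Section PointwiseBound.
Variable R : realFieldType.

Lemma bilinear_min_corner (e x y u v : R) : e < 1 ->
  0 <= x <= 1 - e -> 0 <= y <= 1 - e -> 0 <= u <= 1 - e -> 0 <= v <= 1 - e ->
  (1 - e) * Num.min x y <= x * (1 - e - v) + y * (1 - e - u) + u * v.
Proof.
move=> e1; wlog xy : x y u v / x <= y.
  move=> hwlog hx hy hu hv; have /orP[xy|yx] := le_total x y; first exact: hwlog.
  have -> : x * (1 - e - v) + y * (1 - e - u) + u * v
          = y * (1 - e - u) + x * (1 - e - v) + v * u by ring.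
  by rewrite minC; apply: hwlog.
move=> /andP[x0 xc] /andP[y0 yc] /andP[u0 uc] /andP[v0 vc].
rewrite (min_idPl xy).
have key : (1 - e) * (x * (1 - e - u - v) + u * v)
         = x * ((1 - e - u) * (1 - e - v)) + (1 - e - x) * (u * v) by ring.
have h1 : 0 <= x * ((1 - e - u) * (1 - e - v)) by rewrite !mulr_ge0 // subr_ge0.
have h2 : 0 <= (1 - e - x) * (u * v) by rewrite !mulr_ge0 // subr_ge0.
have h3 : 0 <= x * (1 - e - u - v) + u * v.
  have c0 : 0 < 1 - e by lra.
  by rewrite -(pmulr_rge0 _ c0) key addr_ge0.
have h4 : x * (1 - e - u) <= y * (1 - e - u) by rewrite ler_wpM2r // subr_ge0.
nra.
Qed.

Lemma shifted_product_le_min (e x y : R) : 0 <= e ->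
  0 <= x <= 1 - e -> 0 <= y <= 1 - e ->
  (1 + e) * x * y + e ^+ 2 * (x + y) - e ^+ 2 * (1 - e) <= Num.min x y.
Proof.
move=> e0 /andP[x0 xc] /andP[y0 yc].
have hx : (1 + e) * x + e ^+ 2 <= 1.
  have : 0 <= (1 + e) * (1 - e - x) by apply: mulr_ge0; lra.
  nra.
have hy : (1 + e) * y + e ^+ 2 <= 1.
  have : 0 <= (1 + e) * (1 - e - y) by apply: mulr_ge0; lra.
  nra.
rewrite le_min; apply/andP; split.
- have : 0 <= x * (1 - ((1 + e) * y + e ^+ 2)) by apply: mulr_ge0; lra.
  have : 0 <= e ^+ 2 * (1 - e - y) by apply: mulr_ge0; [exact: sqr_ge0 | lra].
  nra.
- have : 0 <= y * (1 - ((1 + e) * x + e ^+ 2)) by apply: mulr_ge0; lra.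
  have : 0 <= e ^+ 2 * (1 - e - x) by apply: mulr_ge0; [exact: sqr_ge0 | lra].
  nra.
Qed.

Lemma product_le_of_small (e s t : R) :
  0 <= s <= e -> 0 <= t <= 1 -> (1 + e) * (s * t) <= e * (s + t).
Proof.
move=> /andP[s0 se] /andP[t0 t1].
have : 0 <= (e - s) * t + e * (s * (1 - t)).
  apply: addr_ge0; apply: mulr_ge0; try lra.
  by apply: mulr_ge0; lra.
nra.
Qed.

(* [s, a01, a10, a11] stand for A(0|xy) and [t, b01, b10, b11] for B(0|xy),
   at xy = 00, 01, 10, 11. *)
Lemma ineq_pointwise (e s t a01 a10 a11 b01 b10 b11 : R) :
  0 <= e -> e < 1 ->
  0 <= s <= 1 -> 0 <= t <= 1 -> 0 <= a01 <= 1 -> 0 <= a10 <= 1 -> 0 <= a11 <= 1 ->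
  0 <= b01 <= 1 -> 0 <= b10 <= 1 -> 0 <= b11 <= 1 ->
  `|s - a01| <= e -> `|a10 - a11| <= e -> `|t - b10| <= e -> `|b01 - b11| <= e ->
  (1 - e) * (s * t) + e * (1 - e) * ((1 - s) * (1 - t))
    - a01 * (1 - b01) - (1 - a10) * b10 - a11 * b11 <= e * (1 - e).
Proof.
move=> e0 e1 hs ht ha01 ha10 ha11 hb01 hb10 hb11.
move=> /ler_normlP[sa01 sa01'] /ler_normlP[a1011 a1011'].
move=> /ler_normlP[tb10 tb10'] /ler_normlP[b0111 b0111'].
have rhs0 : 0 <= a01 * (1 - b01) + (1 - a10) * b10 + a11 * b11.
  by apply: addr_ge0; [apply: addr_ge0|]; apply: mulr_ge0; lra.
suff : (1 - e) * ((1 + e) * (s * t) - e * (s + t))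
         <= a01 * (1 - b01) + (1 - a10) * b10 + a11 * b11 by lra.
have [s0 s1] := andP hs; have [t0 t1] := andP ht.
have c0 : 0 <= 1 - e by lra.
have [se|es] := lerP s e.
  have : (1 + e) * (s * t) - e * (s + t) <= 0.
    by rewrite subr_le0 product_le_of_small ?s0 ?se.
  by move=> /(mulr_ge0_le0 c0); lra.
have [te|et] := lerP t e.
  have : (1 + e) * (s * t) - e * (s + t) <= 0.
    by rewrite [s * t]mulrC [s + t]addrC subr_le0 product_le_of_small ?t0 ?te.
  by move=> /(mulr_ge0_le0 c0); lra.
pose u := Num.min a11 (1 - e); pose v := Num.min b11 (1 - e).
have hx : 0 <= s - e <= 1 - e by apply/andP; split; lra.
have hy : 0 <= t - e <= 1 - e by apply/andP; split; lra.
have [a110 _] := andP ha11; have [b110 _] := andP hb11.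
have hu : 0 <= u <= 1 - e by rewrite ge_min lexx orbT le_min a110 c0.
have hv : 0 <= v <= 1 - e by rewrite ge_min lexx orbT le_min b110 c0.
have shift : (1 + e) * (s * t) - e * (s + t)
  = (1 + e) * (s - e) * (t - e) + e ^+ 2 * ((s - e) + (t - e)) - e ^+ 2 * (1 - e).
  by ring.
have hmin := shifted_product_le_min e0 hx hy.
have hcorner := bilinear_min_corner e1 hx hy hu hv.
have hxv : (s - e) * (1 - e - v) <= a01 * (1 - b01).
  apply: ler_pM; rewrite /v; [lra | | lra |].
  - by rewrite subr_ge0 ge_min lexx orbT.
  - by rewrite minEle; case: (leP b11 (1 - e)); lra.
have hyu : (t - e) * (1 - e - u) <= (1 - a10) * b10.
  rewrite mulrC; apply: ler_pM; rewrite /u; [| lra | | lra].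
  - by rewrite subr_ge0 ge_min lexx orbT.
  - by rewrite minEle; case: (leP a11 (1 - e)); lra.
have huv : u * v <= a11 * b11.
  apply: ler_pM; rewrite /u /v ?ge_min ?lexx //.
  - by move: hu => /andP[].
  - by move: hv => /andP[].
rewrite shift; have := ler_wpM2l c0 hmin; lra.
Qed.

End PointwiseBound.

Section LocalResponse.
Variables (R : realType) (e : R) (A B : bool -> bool -> bool -> R).
Hypothesis hAB : local_response e A B.

Lemma response_A_true x y : A true x y = 1 - A false x y.
Proof. by case: hAB => /(_ x y) [_ [_ [h _]]] _ _; lra. Qed.

Lemma response_B_true x y : B true x y = 1 - B false x y.
Proof. by case: hAB => /(_ x y) [_ [_ [_ [_ [_ h]]]]] _ _; lra. Qed.

Lemma response_A_bound x y : 0 <= A false x y <= 1.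
Proof. by case: hAB => /(_ x y) [a0 [a1 [h _]]] _ _; apply/andP; split; lra. Qed.

Lemma response_B_bound x y : 0 <= B false x y <= 1.
Proof. by case: hAB => /(_ x y) [_ [_ [_ [b0 [b1 h]]]]] _ _; apply/andP; split; lra. Qed.

Lemma response_A_signal x : `|A false x false - A false x true| <= e.
Proof.
case: hAB => _ /(_ x false true) + _; rewrite !response_A_true.
have -> : 1 - A false x false - (1 - A false x true)
        = - (A false x false - A false x true) by ring.
rewrite normrN; lra.
Qed.

Lemma response_B_signal y : `|B false false y - B false true y| <= e.
Proof.
case: hAB => _ _ /(_ y false true); rewrite !response_B_true.
have -> : 1 - B false false y - (1 - B false true y)
        = - (B false false y - B false true y) by ring.
rewrite normrN; lra.
Qed.

End LocalResponse.

Section Relations.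
Variable R : realType.

Definition ineq_coeffs (e : R) : seq (R * entry) :=
  [:: (1 - e, (false, false, false, false)); (e * (1 - e), (true, true, false, false));
      (-1, (false, true, false, true)); (-1, (true, false, true, false));
      (-1, (false, false, true, true))].

Lemma ineq_lhs_lincomb (e : R) (p : behav R) : ineq_lhs e p = lincomb (ineq_coeffs e) p.
Proof. by rewrite /ineq_lhs !lincomb_cons lincomb_nil /=; ring. Qed.

Theorem ineq_lhs_le (e : R) (p : behav R) :
  0 <= e -> e < 1 -> in_P e p -> ineq_lhs e p <= e * (1 - e).
Proof.
move=> e0 e1 hp; rewrite ineq_lhs_lincomb; apply: (in_P_lincomb_le hp) => A B hAB.
rewrite -ineq_lhs_lincomb /ineq_lhs /prod_behav !(response_A_true hAB) !(response_B_true hAB).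
have := ineq_pointwise e0 e1
  (response_A_bound hAB false false) (response_B_bound hAB false false)
  (response_A_bound hAB false true) (response_A_bound hAB true false)
  (response_A_bound hAB true true) (response_B_bound hAB false true)
  (response_B_bound hAB true false) (response_B_bound hAB true true)
  (response_A_signal hAB false) (response_A_signal hAB true)
  (response_B_signal hAB false) (response_B_signal hAB true).
lra.
Qed.

Definition norm_coeffs (x y : bool) : seq (R * entry) :=
  [:: (1, (false, false, x, y)); (1, (false, true, x, y));
      (1, (true, false, x, y)); (1, (true, true, x, y))].

Lemma in_P_norm (e : R) (p : behav R) x y : in_P e p -> lincomb (norm_coeffs x y) p = 1.
Proof.
move=> hp; apply: (in_P_lincomb_eq hp) => A B hAB.
rewrite !lincomb_cons lincomb_nil /prod_behav /=.
by rewrite !(response_A_true hAB) !(response_B_true hAB); ring.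
Qed.

Definition nosignal_A_coeffs (x : bool) : seq (R * entry) :=
  [:: (1, (false, false, x, false)); (1, (false, true, x, false));
      (-1, (false, false, x, true)); (-1, (false, true, x, true))].

Definition nosignal_B_coeffs (y : bool) : seq (R * entry) :=
  [:: (1, (false, false, false, y)); (1, (true, false, false, y));
      (-1, (false, false, true, y)); (-1, (true, false, true, y))].

Lemma in_P0_nosignal_A (p : behav R) x : in_P 0 p -> lincomb (nosignal_A_coeffs x) p = 0.
Proof.
move=> hp; apply: (in_P_lincomb_eq hp) => A B hAB.
have := response_A_signal hAB x; rewrite normr_le0 subr_eq0 => /eqP hA.
rewrite !lincomb_cons lincomb_nil /prod_behav /= !(response_B_true hAB) hA; ring.
Qed.

Lemma in_P0_nosignal_B (p : behav R) y : in_P 0 p -> lincomb (nosignal_B_coeffs y) p = 0.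
Proof.
move=> hp; apply: (in_P_lincomb_eq hp) => A B hAB.
have := response_B_signal hAB y; rewrite normr_le0 subr_eq0 => /eqP hB.
rewrite !lincomb_cons lincomb_nil /prod_behav /= !(response_A_true hAB) hB; ring.
Qed.

End Relations.

(** * Affine dimension *)

Lemma exists_nonzero_left_kernel (F : fieldType) m n (M : 'M[F]_(m, n)) : (n < m)%N ->
  exists2 c : 'I_m -> F, exists i, c i != 0 & forall k, \sum_i c i * M i k = 0.
Proof.
move=> nm; have : kermx M != 0.
  rewrite -mxrank_eq0 mxrank_ker subn_eq0 -ltnNge.
  exact: leq_ltn_trans (rank_leq_col M) nm.
have [[i j] /= kerij | ker0] := pickP (fun ij : 'I_m * 'I_m => kermx M ij.1 ij.2 != 0).
  exists (fun l => kermx M i l); first by exists j.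
  move=> k; have := congr1 (fun N : 'M[F]_(m, n) => N i k) (mulmx_ker M).
  by rewrite !mxE.
move=> /eqP kerM_ne0; exfalso; apply: kerM_ne0; apply/matrixP => i j; rewrite [RHS]mxE.
by have /negbFE/eqP := ker0 (i, j).
Qed.

Section AffineCombinations.
Variable R : realType.

Definition comb m (c : 'I_m -> R) (q : 'I_m -> behav R) : behav R :=
  fun a b x y => \sum_i c i * q i a b x y.

Lemma behav_at_comb m c (q : 'I_m -> behav R) k :
  behav_at (comb c q) k = \sum_i c i * behav_at (q i) k.
Proof. by case: k => [[[a b] x] y]. Qed.

Lemma lincomb_comb m c (q : 'I_m -> behav R) s :
  lincomb s (comb c q) = \sum_i c i * lincomb s (q i).
Proof.
rewrite /lincomb; under [RHS]eq_bigr do rewrite big_distrr.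
rewrite exchange_big; apply: eq_bigr => wk _.
by rewrite behav_at_comb big_distrr /=; apply: eq_bigr => i _; rewrite mulrCA.
Qed.

Lemma lincomb_comb_affine m c (q : 'I_m -> behav R) s b :
  \sum_i c i = 0 -> (forall i, lincomb s (q i) = b) -> lincomb s (comb c q) = 0.
Proof.
move=> c0 hq; rewrite lincomb_comb.
by under eq_bigr do rewrite hq; rewrite -big_distrl /= c0 mul0r.
Qed.

(* Affine combinations of points of [S] that vanish on the coordinates [sel]
   vanish identically, so the affine hull of [S] has dimension at most [size sel]. *)
Definition determines_hull (S : behav R -> Prop) (sel : seq entry) : Prop :=
  forall m (q : 'I_m -> behav R) (c : 'I_m -> R), (forall i, S (q i)) ->
    \sum_i c i = 0 -> (forall k, k \in sel -> behav_at (comb c q) k = 0) ->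
    forall a b x y, comb c q a b x y = 0.

Lemma determines_hull_not_aff_indep S sel : determines_hull S sel ->
  forall q : 'I_(size sel).+2 -> behav R, (forall i, S (q i)) -> ~ aff_indep q.
Proof.
move=> hS q Sq indep; set n := size sel.
pose M : 'M[R]_(n.+2, 1 + n) :=
  row_mx (const_mx 1) (\matrix_(i, j) behav_at (q i) (nth (false, false, false, false) sel j)).
have [c [i ci] kerM] := exists_nonzero_left_kernel M (leqnn _).
have c0 : \sum_i c i = 0.
  by rewrite -[RHS](kerM (lshift n ord0)); apply: eq_bigr => l _; rewrite row_mxEl mxE mulr1.
have csel k : k \in sel -> behav_at (comb c q) k = 0.
  move=> ksel; have kn : (index k sel < n)%N by rewrite index_mem.
  rewrite -(nth_index (false, false, false, false) ksel) behav_at_comb.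
  rewrite -[RHS](kerM (rshift 1 (Ordinal kn))).
  by apply: eq_bigr => l _; rewrite row_mxEr mxE.
by move: ci; rewrite (indep c c0 (hS _ _ _ Sq c0 csel)) eqxx.
Qed.

Definition eval_opt (o : option entry) (p : behav R) : R :=
  if o is Some k then behav_at p k else 1.

Lemma aff_indep_triangular n (q : 'I_n.+1 -> behav R) (phi : 'I_n.+1 -> option entry) :
  (forall i j : 'I_n.+1, (i < j)%N -> eval_opt (phi i) (q j) = 0) ->
  (forall i, eval_opt (phi i) (q i) != 0) -> aff_indep q.
Proof.
move=> upper diag c c0 cq.
have cphi o : \sum_j c j * eval_opt o (q j) = 0.
  case: o => [k|]; last by under eq_bigr do rewrite mulr1.
  by rewrite -behav_at_comb; case: k => [[[a b] x] y]; exact: cq.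
suff below k : forall i : 'I_n.+1, (i < k)%N -> c i = 0 by move=> i; exact: (below n.+1).
elim: k => // k IHk i; rewrite ltnS leq_eqVlt => /orP[/eqP ik|]; last exact: IHk.
have := cphi (phi i); rewrite (bigD1 i) //= big1 ?addr0.
  by move/eqP; rewrite mulf_eq0 (negbTE (diag i)) orbF => /eqP.
move=> j ji; have [jlt|jgt] := ltnP j i; first by rewrite IHk ?mul0r // -ik.
by rewrite upper ?mulr0 // ltn_neqAle eq_sym jgt andbT; apply: contra ji => /eqP/val_inj ->.
Qed.

Lemma aff_indep_lift n (q : 'I_n.+2 -> behav R) (h : 'I_n.+2) :
  aff_indep q -> aff_indep (fun i => q (lift h i)).
Proof.
move=> indep c c0 cq i.
pose c' j := if unlift h j is Some l then c l else 0.
have c'lift l : c' (lift h l) = c l by rewrite /c' liftK.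
have c'h : c' h = 0 by rewrite /c' unlift_none.
have sum_c' (F : 'I_n.+2 -> R) : \sum_j c' j * F j = \sum_l c l * F (lift h l).
  by rewrite (bigD1_ord h) //= c'h mul0r add0r; apply: eq_bigr => l _; rewrite c'lift.
rewrite -c'lift; apply: indep => [|a b x y].
  by rewrite (bigD1_ord h) //= c'h add0r; under eq_bigr do rewrite c'lift.
by rewrite sum_c'; exact: cq.
Qed.

End AffineCombinations.

Section Hulls.
Variable R : realType.

Lemma comb_11_of_norm (e : R) m (q : 'I_m -> behav R) c x y :
  (forall i, in_P e (q i)) -> \sum_i c i = 0 ->
  comb c q false false x y = 0 -> comb c q false true x y = 0 ->
  comb c q true false x y = 0 -> comb c q true true x y = 0.
Proof.
move=> Pq c0 z00 z01 z10; have := lincomb_comb_affine c0 (fun i => in_P_norm x y (Pq i)).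
by rewrite !lincomb_cons lincomb_nil /= z00 z01 z10; lra.
Qed.

Definition entries_P : seq entry :=
  [:: (false, false, false, false); (false, true, false, false); (true, false, false, false);
      (false, false, false, true); (false, true, false, true); (true, false, false, true);
      (false, false, true, false); (false, true, true, false); (true, false, true, false);
      (false, false, true, true); (false, true, true, true); (true, false, true, true)].

Lemma in_P_determines_hull (e : R) : determines_hull (in_P e) entries_P.
Proof.
move=> m q c Pq c0 hsel a b x y.
have z a' b' : (a', b') != (true, true) -> comb c q a' b' x y = 0.
  by move=> ab; apply: (hsel (a', b', x, y)); move: ab; case: a'; case: b'; case: x; case: y.
case: a; case: b; try by rewrite z.
by apply: (comb_11_of_norm Pq c0); rewrite z.
Qed.

Definition facet (e : R) (p : behav R) : Prop := in_P e p /\ ineq_lhs e p = e * (1 - e).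

Lemma facet_determines_hull (e : R) :
  e < 1 -> determines_hull (facet e) (behead entries_P).
Proof.
move=> e1 m q c Fq c0 hsel.
have Pq i : in_P e (q i) by case: (Fq i).
apply: (in_P_determines_hull Pq c0) => k.
rewrite in_cons => /orP[/eqP -> /=|]; last exact: hsel.
have hnorm := lincomb_comb_affine c0 (fun i => in_P_norm false false (Pq i)).
have hface : lincomb (ineq_coeffs e) (comb c q) = 0.
  apply: (lincomb_comb_affine (b := e * (1 - e)) c0) => i.
  by rewrite -ineq_lhs_lincomb; case: (Fq i).
move: hnorm hface; rewrite !lincomb_cons !lincomb_nil /=.
have z a b x y : (a, b, x, y) \in behead entries_P -> comb c q a b x y = 0.
  exact: (hsel (a, b, x, y)).
rewrite (z false true false false) // (z true false false false) //.
rewrite (z false true false true) // (z true false true false) // (z false false true true) //.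
set z0 := comb c q false false false false; move=> hnorm hface.
have : (1 - e) ^+ 2 * z0 = 0.
  by rewrite -[RHS]hface (_ : comb c q true true false false = - z0); [ring | lra].
by move/eqP; rewrite mulf_eq0 expf_eq0 subr_eq0 => /orP[/andP[_ /eqP]|/eqP //]; lra.
Qed.

Definition entries_P0 : seq entry :=
  [:: (false, false, false, false); (false, false, false, true); (false, false, true, false);
      (false, false, true, true); (false, true, false, false); (false, true, true, false);
      (true, false, false, false); (true, false, false, true)].

Lemma in_P0_determines_hull : determines_hull (@in_P R 0) entries_P0.
Proof.
move=> m q c Pq c0 hsel.
have z a b x y : (a, b, x, y) \in entries_P0 -> comb c q a b x y = 0.
  exact: (hsel (a, b, x, y)).
have nsA x := lincomb_comb_affine c0 (fun i => in_P0_nosignal_A x (Pq i)).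
have nsB y := lincomb_comb_affine c0 (fun i => in_P0_nosignal_B y (Pq i)).
have z0101 : comb c q false true false true = 0.
  move: (nsA false); rewrite !lincomb_cons lincomb_nil /=.
  rewrite (z false false false false) // (z false true false false) //.
  by rewrite (z false false false true) //; lra.
have z0111 : comb c q false true true true = 0.
  move: (nsA true); rewrite !lincomb_cons lincomb_nil /=.
  rewrite (z false false true false) // (z false true true false) //.
  by rewrite (z false false true true) //; lra.
have z1010 : comb c q true false true false = 0.
  move: (nsB false); rewrite !lincomb_cons lincomb_nil /=.
  rewrite (z false false false false) // (z true false false false) //.
  by rewrite (z false false true false) //; lra.
have z1011 : comb c q true false true true = 0.
  move: (nsB true); rewrite !lincomb_cons lincomb_nil /=.
  rewrite (z false false false true) // (z true false false true) //.
  by rewrite (z false false true true) //; lra.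
apply: (in_P_determines_hull Pq c0) => -[[[a b] x] y].
by case: a; case: b; case: x; case: y => // _; first [assumption | exact: z].
Qed.

Lemma facet0_determines_hull : determines_hull (facet (0 : R)) (behead entries_P0).
Proof.
move=> m q c Fq c0 hsel.
have Pq i : in_P 0 (q i) by case: (Fq i).
apply: (in_P0_determines_hull Pq c0) => k.
rewrite in_cons => /orP[/eqP -> /=|]; last exact: hsel.
have z a b x y : (a, b, x, y) \in behead entries_P0 -> comb c q a b x y = 0.
  exact: (hsel (a, b, x, y)).
have nsA := lincomb_comb_affine c0 (fun i => in_P0_nosignal_A false (Pq i)).
have nsB := lincomb_comb_affine c0 (fun i => in_P0_nosignal_B false (Pq i)).
have hface : lincomb (ineq_coeffs 0) (comb c q) = 0.
  apply: (lincomb_comb_affine (b := 0 * (1 - 0)) c0) => i.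
  by rewrite -ineq_lhs_lincomb; case: (Fq i).
move: nsA nsB hface; rewrite !lincomb_cons !lincomb_nil /=.
rewrite (z false false false true) // (z false false true false) // (z false false true true) //.
rewrite (z false true false false) // (z true false false false) //.
lra.
Qed.

End Hulls.

(** * Explicit points *)

Section ProductBehaviours.
Variable R : realType.

Lemma in_P_prod_behav e (A B : bool -> bool -> bool -> R) :
  local_response e A B -> in_P e (prod_behav A B).
Proof.
move=> hAB; exists _, R, \d_(0 : R), (fun a x y _ => A a x y), (fun b x y _ => B b x y).
split; first by move=> *; exact: measurable_cst.
split; first by move=> *; exact: measurable_cst.
case: hAB => hnorm hA hB; split => //.
by move=> a b x y; rewrite integral_cst //= diracT mule1.
Qed.

(* The vertices of the hexagon {(u, v) in [0,1]^2 : |u - v| <= e} of admissible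
   response pairs (A(0|x,0), A(0|x,1)). *)
Definition band_vertex (e : R) (k : nat) : R * R :=
  match k with
  | 0 => (0, 0) | 1 => (1, 1) | 2 => (0, e) | 3 => (e, 0) | 4 => (1, 1 - e)
  | _ => (1 - e, 1)
  end.

Definition in_band (e : R) (v : R * R) : Prop :=
  [/\ 0 <= v.1 <= 1, 0 <= v.2 <= 1 & `|v.1 - v.2| <= e].

Lemma band_vertex_in_band e k : 0 <= e -> e < 1 -> in_band e (band_vertex e k).
Proof.
move=> e0 e1.
by case: k => [|[|[|[|[|k]]]]]; split => /=;
  first [apply/ler_normlP; split; lra | apply/andP; split; lra].
Qed.

Definition band_response (v : R * R) (a z : bool) : R :=
  let r := if z then v.2 else v.1 in if a then 1 - r else r.

Lemma local_response_band e (vA vB : bool -> R * R) :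
  (forall x, in_band e (vA x)) -> (forall y, in_band e (vB y)) ->
  local_response e (fun a x y => band_response (vA x) a y)
                   (fun b x y => band_response (vB y) b x).
Proof.
move=> hA hB.
have flip u v : `|1 - u - (1 - v)| = `|u - v| by rewrite -normrN; congr `|_|; ring.
split.
- move=> x y; have := hA x; have := hB y; rewrite /band_response.
  by case: x; case: y => -[/andP[? ?] /andP[? ?] _] [/andP[? ?] /andP[? ?] _] /=;
    do !split; lra.
- move=> x y y'; have [_ _ hd] := hA x; have := normr_ge0 ((vA x).1 - (vA x).2).
  rewrite /band_response.
  by case: y; case: y' => /=; rewrite ?subrr ?normr0 ?flip ?(distrC (vA x).2); lra.
- move=> y x x'; have [_ _ hd] := hB y; have := normr_ge0 ((vB y).1 - (vB y).2).
  rewrite /band_response.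
  by case: x; case: x' => /=; rewrite ?subrr ?normr0 ?flip ?(distrC (vB y).2); lra.
Qed.

End ProductBehaviours.

Section Vertices.
Variable R : realType.

(* Alice answers input x with the response pair [band_vertex e l_x] (indexed by
   y), Bob answers input y with [band_vertex e l_(2+y)] (indexed by x). *)
Definition vertex_behav (e : R) (l : nat * nat * nat * nat) : behav R :=
  let '(l0, l1, l2, l3) := l in
  prod_behav (fun a x y => band_response (band_vertex e (if x then l1 else l0)) a y)
             (fun b x y => band_response (band_vertex e (if y then l3 else l2)) b x).

Lemma in_P_vertex_behav (e : R) l : 0 <= e -> e < 1 -> in_P e (vertex_behav e l).
Proof.
move=> e0 e1; case: l => [[[l0 l1] l2] l3]; apply: in_P_prod_behav.
by apply: local_response_band => -[]; exact: band_vertex_in_band.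
Qed.

Definition labels_P : seq (nat * nat * nat * nat) :=
  [:: (4, 4, 1, 4); (1, 3, 3, 4); (4, 4, 1, 3); (4, 3, 4, 4); (2, 0, 0, 1); (0, 3, 0, 1);
      (0, 3, 0, 3); (3, 4, 1, 0); (3, 1, 1, 3); (0, 1, 1, 0); (0, 1, 2, 0); (0, 1, 0, 3);
      (0, 1, 0, 0)].

(* The [i]-th pivot vanishes on the points of [labels_P] after the [i]-th one but
   not on the [i]-th one itself. *)
Definition pivots_P : seq (option entry) :=
  [:: Some (false, false, true, true); Some (false, true, false, false);
      Some (false, true, false, true); Some (true, false, true, false);
      Some (false, false, false, true); Some (true, false, true, true);
      Some (true, true, true, false); Some (true, true, true, true);
      Some (false, false, false, false); Some (true, false, false, false);
      Some (false, false, true, false); Some (true, false, false, true); None].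

Definition family_P (e : R) (i : 'I_13) : behav R :=
  vertex_behav e (nth (0, 0, 0, 0)%N labels_P i).

Lemma aff_indep_family_P (e : R) : 0 < e -> e < 1 -> aff_indep (family_P e).
Proof.
move=> e0 e1; apply: (aff_indep_triangular (phi := fun i => nth None pivots_P i)).
  move=> [i hi] [j hj] /= ij.
  do 13 (try (case: i hi ij => [|i] hi ij)); do 13 (try (case: j hj ij => [|j] hj ij)) => //.
  all: rewrite /family_P /vertex_behav /prod_behav /band_response /= ?subrr ?mulr0 ?mul0r //.
move=> [i hi]; do 13 (try (case: i hi => [|i] hi)) => //.
all: rewrite /family_P /vertex_behav /prod_behav /band_response /=.
all: by apply: lt0r_neq0; first [lra | apply: mulr_gt0; lra].
Qed.

Definition off_facet_P : 'I_13 := Ordinal (isT : (9 < 13)%N).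

Lemma facet_family_P (e : R) i :
  ineq_lhs e (family_P e (lift off_facet_P i)) = e * (1 - e).
Proof.
case: i => i hi; do 12 (try (case: i hi => [|i] hi)) => //.
all: by rewrite /ineq_lhs /family_P /vertex_behav /prod_behav /band_response /=; ring.
Qed.

Definition labels_P0 : seq (nat * nat * nat * nat) :=
  [:: (1, 4, 1, 4); (3, 1, 1, 0); (4, 1, 1, 3); (1, 3, 4, 1); (1, 0, 3, 1); (1, 1, 0, 0);
      (0, 1, 0, 0); (0, 0, 0, 1); (0, 0, 0, 0)].

Definition pivots_P0 : seq (option entry) :=
  [:: Some (false, false, true, true); Some (true, false, false, false);
      Some (false, false, true, false); Some (false, false, false, false);
      Some (false, false, false, true); Some (false, true, false, false);
      Some (false, true, true, false); Some (true, false, false, true); None].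

Definition family_P0 (i : 'I_9) : behav R :=
  vertex_behav 0 (nth (0, 0, 0, 0)%N labels_P0 i).

Lemma aff_indep_family_P0 : aff_indep family_P0.
Proof.
apply: (aff_indep_triangular (phi := fun i => nth None pivots_P0 i)).
  move=> [i hi] [j hj] /= ij.
  do 9 (try (case: i hi ij => [|i] hi ij)); do 9 (try (case: j hj ij => [|j] hj ij)) => //.
  all: rewrite /family_P0 /vertex_behav /prod_behav /band_response /= ?subrr ?mulr0 ?mul0r //.
move=> [i hi]; do 9 (try (case: i hi => [|i] hi)) => //.
all: rewrite /family_P0 /vertex_behav /prod_behav /band_response /=.
all: by apply: lt0r_neq0; first [lra | apply: mulr_gt0; lra].
Qed.

Definition off_facet_P0 : 'I_9 := Ordinal (isT : (5 < 9)%N).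

Lemma facet_family_P0 i : ineq_lhs 0 (family_P0 (lift off_facet_P0 i)) = 0 * (1 - 0).
Proof.
case: i => i hi; do 8 (try (case: i hi => [|i] hi)) => //.
all: by rewrite /ineq_lhs /family_P0 /vertex_behav /prod_behav /band_response /=; ring.
Qed.

Lemma affdim_of_hull_indep (S : behav R -> Prop) sel (q : 'I_(size sel).+1 -> behav R) :
  determines_hull S sel -> aff_indep q -> (forall i, S (q i)) -> affdim S (size sel).
Proof.
by move=> hS indep Sq; split; [exists q | exact: determines_hull_not_aff_indep].
Qed.

Lemma affdim_P (e : R) : 0 < e -> e < 1 -> affdim (in_P e) 12.
Proof.
move=> e0 e1; apply: (affdim_of_hull_indep (in_P_determines_hull (e := e))
  (aff_indep_family_P e0 e1)) => i.
by apply: in_P_vertex_behav => //; exact: ltW.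
Qed.

Lemma affdim_facet (e : R) : 0 < e -> e < 1 -> affdim (facet e) 11.
Proof.
move=> e0 e1; apply: (affdim_of_hull_indep (facet_determines_hull e1)
  (aff_indep_lift (h := off_facet_P) (aff_indep_family_P e0 e1))) => i.
by split; [apply: in_P_vertex_behav => //; exact: ltW | exact: facet_family_P].
Qed.

Lemma affdim_P0 : affdim (@in_P R 0) 8.
Proof.
apply: (affdim_of_hull_indep (@in_P0_determines_hull R) aff_indep_family_P0) => i.
exact: in_P_vertex_behav.
Qed.

Lemma affdim_facet0 : affdim (@facet R 0) 7.
Proof.
apply: (affdim_of_hull_indep (@facet0_determines_hull R)
  (aff_indep_lift (h := off_facet_P0) aff_indep_family_P0)) => i.
by split; [exact: in_P_vertex_behav | exact: facet_family_P0].
Qed.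

End Vertices.

Unset Implicit Arguments.

Theorem mainTheorem6 (R : realType) (eps : R) (heps0 : 0 <= eps) (heps1 : eps < 1) :
  (forall p : behav R, in_P eps p -> ineq_lhs eps p <= eps * (1 - eps)) /\
  (exists k : nat,
      affdim (in_P eps) k.+1 /\
      affdim (fun p => in_P eps p /\ ineq_lhs eps p = eps * (1 - eps)) k) /\
  (0 < eps -> affdim (in_P eps) 12).
Proof.
split; first by move=> p; exact: ineq_lhs_le.
split; last by move=> eps0; exact: affdim_P.
have [-> | eps_neq0] := eqVneq eps 0.
  by exists 7%N; split; [exact: affdim_P0 | exact: affdim_facet0].
have eps0 : 0 < eps by rewrite lt_neqAle eq_sym eps_neq0.
by exists 11%N; split; [exact: affdim_P | exact: affdim_facet].
Qed.
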